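(* Let $N\ge 1$, let $\lambda_1,\dots,\lambda_N>0$, let $\mathbf{D}=\mathrm{diag}(\lambda_1,\dots,\lambda_N)$, and let $\mathbf{C}$ be an $N\times N$ symmetric positive definite matrix with all diagonal entries equal to $1$. Then the eigenvalues $\hat\lambda_1,\dots,\hat\lambda_N$ of $\mathbf{A}=\mathbf{D}\mathbf{C}$ are real and positive, and the vector $\hat{\boldsymbol\lambda}=(\hat\lambda_1,\dots,\hat\lambda_N)$ majorizes $\boldsymbol\lambda=(\lambda_1,\dots,\lambda_N)$, i.e. $\hat{\boldsymbol\lambda}\succ\boldsymbol\lambda$. *)

(* Matrices over an arbitrary real closed field R
   (e.g. the real algebraic numbers; the statement is first-order). *)
From HB Require Import structures.
From mathcomp Require Import all_boot all_order all_algebra.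
Set Implicit Arguments. Unset Strict Implicit. Unset Printing Implicit Defensive.
Import Order.TTheory GRing.Theory Num.Theory.
Local Open Scope ring_scope.

Definition sym_posdef (R : realFieldType) (n : nat) (C : 'M[R]_n) : Prop :=
  C^T = C /\ forall v : 'rV[R]_n, v != 0 -> 0 < (v *m C *m v^T) ord0 ord0.

Definition sort_decr (R : realFieldType) (s : seq R) : seq R := sort (>=%R) s.

Definition majorizes (R : realFieldType) (x y : seq R) : Prop :=
  size x = size y /\
  (forall k : nat, (k <= size x)%N ->
     \sum_(i < k) (sort_decr y)`_i <= \sum_(i < k) (sort_decr x)`_i) /\
  \sum_(i <- x) i = \sum_(i <- y) i.

(* Conjugating by D^(1/2) turns D C into the symmetric positive definite matrix
   S = D^(1/2) C D^(1/2), which has the same eigenvalues (hence real and positive)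
   and diagonal entries S_ii = lambda_i C_ii = lambda_i.  By Schur's theorem the
   diagonal of a symmetric matrix is the image of its spectrum under the doubly
   stochastic matrix (|P_ji|^2) built from a unitary diagonalising P, and a vector
   Q b with Q doubly stochastic is always majorized by b. *)
From HB Require Import structures.
From mathcomp Require Import all_boot all_order all_algebra all_fingroup.
From mathcomp Require Import complex zify.
Import Order.TTheory GRing.Theory Num.Theory.
Local Open Scope ring_scope.
Set Implicit Arguments. Unset Strict Implicit.

Definition doubly_stochastic (R : numDomainType) n (Q : 'M[R]_n) :=
  [/\ forall i j, 0 <= Q i j, forall i, \sum_j Q i j = 1 & forall j, \sum_i Q i j = 1].

Section Majorization.

Variables (R : realFieldType) (n : nat).

Lemma doubly_stochastic_perm (Q : 'M[R]_n) (p q : 'S_n) :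
  doubly_stochastic Q -> doubly_stochastic (\matrix_(i, j) Q (p i) (q j)).
Proof.
case=> Q0 Qr Qc; split=> [i j | i | j]; first by rewrite mxE.
- rewrite -(Qr (p i)) [RHS](reindex_inj (@perm_inj _ q)).
  by apply: eq_bigr => j _; rewrite mxE.
- rewrite -(Qc (q j)) [RHS](reindex_inj (@perm_inj _ p)).
  by apply: eq_bigr => i _; rewrite mxE.
Qed.

(* With [t := y_(k-1)] every term [(1_(j < k) - w j) * (y j - t)] is nonnegative,
   and the [t]-parts cancel since the indicator and [w] both sum to [k]. *)
Lemma weighted_sum_le_prefix_sum (w y : 'I_n -> R) (k : nat) : (k <= n)%N ->
  (forall j, 0 <= w j <= 1) -> \sum_j w j = k%:R ->
  (forall i j : 'I_n, (i <= j)%N -> y j <= y i) ->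
  \sum_j w j * y j <= \sum_(j < n | (j < k)%N) y j.
Proof.
case: n w y => [|m] w y kn w01 wk ymon; first by rewrite !big_ord0.
pose t := y (inord k.-1).
have indicator_sum : \sum_(j < m.+1) ((j < k)%N%:R : R) = k%:R.
  transitivity (\sum_(j < m.+1 | (j < k)%N) (1 : R)).
    by rewrite [RHS]big_mkcond; apply: eq_bigr => j _; case: ifP.
  by rewrite (big_ord_narrow kn) sumr_const card_ord.
have kval : (inord k.-1 : 'I_m.+1) = k.-1 :> nat by rewrite inordK //; lia.
have terms_ge0 (j : 'I_m.+1) : 0 <= ((j < k)%N%:R - w j) * (y j - t).
  have /andP[w0 w1] := w01 j; case: ltnP => jk.
    by rewrite mulr_ge0 ?subr_ge0 //; apply: ymon; rewrite kval; lia.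
  by rewrite sub0r mulNr -mulrN mulr_ge0 // oppr_ge0 subr_le0; apply: ymon; rewrite kval; lia.
have := @sumr_ge0 _ _ (index_enum 'I_m.+1) predT _ (fun j _ => terms_ge0 j).
under eq_bigr do rewrite mulrBr.
rewrite sumrB -mulr_suml sumrB indicator_sum wk subrr mul0r subr0.
under eq_bigr do rewrite mulrBl; rewrite sumrB subr_ge0.
congr (_ <= _); rewrite [RHS]big_mkcond /=.
by apply: eq_bigr => j _; case: ifP; rewrite ?mul1r ?mul0r.
Qed.

Lemma doubly_stochastic_prefix_sum_le (Q : 'M[R]_n) (y : 'I_n -> R) (k : nat) :
  doubly_stochastic Q -> (k <= n)%N ->
  (forall i j : 'I_n, (i <= j)%N -> y j <= y i) ->
  \sum_(i < n | (i < k)%N) \sum_j Q i j * y j <= \sum_(j < n | (j < k)%N) y j.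
Proof.
case=> Q0 Qr Qc kn ymon.
rewrite exchange_big /=; under eq_bigr do rewrite -mulr_suml.
apply: weighted_sum_le_prefix_sum => // [j|].
  rewrite sumr_ge0 //= -(Qc j) [X in _ <= X](bigID (fun i : 'I_n => (i < k)%N)) /=.
  by rewrite lerDl sumr_ge0.
rewrite exchange_big /= (eq_bigr (fun _ => 1)) => [|i _]; last exact: Qr.
by rewrite (big_ord_narrow kn) sumr_const card_ord.
Qed.

Lemma sort_decr_perm (a : 'I_n -> R) :
  exists p : 'S_n,
    (forall i : 'I_n, (sort_decr [seq a i | i <- enum 'I_n])`_i = a (p i)) /\
    (forall i j : 'I_n, (i <= j)%N -> a (p j) <= a (p i)).
Proof.
set s := sort_decr _.
have : perm_eq s [tuple a i | i < n] by rewrite perm_sort.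
case/tuple_permP => p sE.
have s_nth (i : 'I_n) : s`_i = a (p i).
  by rewrite sE /= (nth_map i) ?size_enum_ord // nth_ord_enum tnth_mktuple.
exists p; split=> // i j ij; rewrite -!s_nth.
have s_sorted : sorted >=%R s by apply: sort_sorted => x y; exact: le_total.
have ge_trans : transitive (>=%R : rel R) by move=> x y z /= yx zy; exact: le_trans zy yx.
apply: (sorted_leq_nth ge_trans (fun x => lexx x) 0 s_sorted) => //;
  by rewrite inE sE size_map size_enum_ord.
Qed.

Lemma doubly_stochastic_majorizes (Q : 'M[R]_n) (a b : 'I_n -> R) :
  doubly_stochastic Q -> (forall i, a i = \sum_j Q i j * b j) ->
  majorizes [seq b i | i <- enum 'I_n] [seq a i | i <- enum 'I_n].
Proof.
move=> Qds abQ; have [_ _ Qc] := Qds.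
split; first by rewrite !size_map.
split; last first.
  rewrite !big_map -!enumT !big_enum /=; under [RHS]eq_bigr do rewrite abQ.
  by rewrite exchange_big /=; apply: eq_bigr => j _; rewrite -mulr_suml Qc mul1r.
rewrite size_map size_enum_ord => k kn.
have [p [a_nth _]] := sort_decr_perm a.
have [q [b_nth b_sorted]] := sort_decr_perm b.
have prefix_sum (s : seq R) (f : 'I_n -> R) : (forall i : 'I_n, s`_i = f i) ->
    \sum_(i < k) s`_i = \sum_(i < n | (i < k)%N) f i.
  by move=> sf; rewrite (big_ord_narrow kn); apply: eq_bigr => i _; rewrite -sf.
rewrite (prefix_sum _ _ a_nth) (prefix_sum _ _ b_nth).
under eq_bigr do rewrite abQ.
under eq_bigr do rewrite (reindex_inj (@perm_inj _ q)).
have := doubly_stochastic_prefix_sum_le (doubly_stochastic_perm p q Qds) kn b_sorted.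
rewrite (eq_bigr (fun i => \sum_j Q (p i) (q j) * b (q j))) // => i _.
by apply: eq_bigr => j _; rewrite mxE.
Qed.

End Majorization.

Lemma char_poly_conjmx (F : fieldType) n (P A : 'M[F]_n) : P \in unitmx ->
  char_poly (conjmx P A) = char_poly A.
Proof.
move=> Pu; rewrite conjumx // /char_poly /char_poly_mx.
pose Pp := map_mx (@polyC F) P; pose Ip := map_mx (@polyC F) (invmx P).
have PIp : Pp *m Ip = 1%:M by rewrite -map_mxM mulmxV // map_mx1.
have -> : 'X%:M - map_mx (@polyC F) (P *m A *m invmx P) =
          Pp *m ('X%:M - map_mx (@polyC F) A) *m Ip.
  rewrite mulmxBr mulmxBl !map_mxM -/Ip -/Pp; congr (_ - _).
  by rewrite -mulmxA -scalar_mxC mulmxA PIp mul1mx.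
by rewrite !det_mulmx mulrAC -det_mulmx PIp det1 mul1r.
Qed.

Section RealSpectral.

Variables (R : rcfType) (n : nat).
Local Notation toC := (real_complex R).
Local Notation ReC := (@complex.Re R).

Lemma mul_conjC_real (z : R[i]) : z^* * z \is Num.real.
Proof. by apply: ger0_real; rewrite mulrC mul_conjC_ge0. Qed.

Lemma unitary_sqr_norm_doubly_stochastic (P : 'M[R[i]]_n) : P \is unitarymx ->
  doubly_stochastic (\matrix_(i, j) ReC ((P j i)^* * P j i)).
Proof.
move=> Punit.
have sqr_normE i j : toC (ReC ((P j i)^* * P j i)) = (P j i)^* * P j i.
  exact/RRe_real/mul_conjC_real.
have PtP : (P ^t* )%sesqui *m P = 1%:M.
  by rewrite -invmx_unitary // mulVmx // unitarymx_unit.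
have PPt : P *m (P ^t* )%sesqui = 1%:M by apply/unitarymxP.
split=> [i j | i | j]; first by rewrite mxE -ler0c sqr_normE mulrC mul_conjC_ge0.
all: apply: complexI; rewrite rmorph1 rmorph_sum.
- under eq_bigr do rewrite mxE /= sqr_normE.
  have /matrixP/(_ i i) := PtP; rewrite !mxE eqxx mulr1n => <-.
  by apply: eq_bigr => j _; rewrite !mxE.
- under eq_bigr do rewrite mxE /= sqr_normE.
  have /matrixP/(_ j j) := PPt; rewrite !mxE eqxx mulr1n => <-.
  by apply: eq_bigr => i _; rewrite !mxE mulrC.
Qed.

Lemma sym_diag_doubly_stochastic_spectrum (S : 'M[R]_n) : S^T = S ->
  exists (mu : 'rV[R]_n) (Q : 'M[R]_n),
    [/\ char_poly S = \prod_(i < n) ('X - (mu ord0 i)%:P), doubly_stochastic Q &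
         forall i, S i i = \sum_j Q i j * mu ord0 j].
Proof.
move=> Ssym; pose Sc := map_mx toC S.
have Sherm : Sc \is hermsymmx.
  apply: realsym_hermsym.
    rewrite is_hermitianmxE expr0 scale1r; apply/eqP/matrixP => i j.
    by rewrite !mxE -[in LHS]Ssym mxE.
  by apply/mxOverP => i j; rewrite mxE; apply/complex_realP; exists (S i j).
have Sdec := orthomx_spectralP (hermitian_normalmx Sherm).
set P := spectralmx Sc in Sdec; set d := spectral_diag Sc in Sdec.
have Punit : P \is unitarymx := spectral_unitarymx Sc.
pose mu : 'rV[R]_n := \row_j ReC (d ord0 j).
have d_real j : d ord0 j \is Num.real.
  by have /mxOverP := hermitian_spectral_diag_real Sherm; apply.
have mu_d j : toC (mu ord0 j) = d ord0 j by rewrite mxE RRe_real.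
exists mu, (\matrix_(i, j) ReC ((P j i)^* * P j i)); split.
- apply: (@map_poly_inj _ _ toC); rewrite map_char_poly -/Sc Sdec.
  rewrite -conjVmx ?unitarymx_unit // char_poly_conjmx ?unitmx_inv ?unitarymx_unit //.
  rewrite char_poly_trig ?diag_mx_is_trig // rmorph_prod; apply: eq_bigr => i _.
  by rewrite /= map_polyXsubC mxE eqxx mulr1n -mu_d.
- exact: unitary_sqr_norm_doubly_stochastic.
- move=> i; apply: complexI; rewrite rmorph_sum.
  have /matrixP/(_ i i) := Sdec; rewrite mxE => ->.
  rewrite invmx_unitary // mul_mx_diag mxE; apply: eq_bigr => j _.
  by rewrite !mxE rmorphM /= !RRe_real ?mul_conjC_real // mulrAC.
Qed.

End RealSpectral.

Section PositiveDefinite.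

Variables (R : realFieldType) (n : nat).

Lemma row_dot_self_gt0 (v : 'rV[R]_n) : v != 0 -> 0 < (v *m v^T) ord0 ord0.
Proof.
move=> v_neq0; have [j vj_neq0] : exists j, v ord0 j != 0.
  apply/existsP; apply: contraNT v_neq0 => /existsPn v0.
  by apply/eqP/rowP => j; rewrite mxE; apply/eqP/negPn/v0.
rewrite mxE (bigD1 j) //= mxE -expr2 ltr_pwDl ?exprn_even_gt0 //.
by apply: sumr_ge0 => k _; rewrite mxE -expr2 sqr_ge0.
Qed.

Lemma sym_posdef_congr (C P : 'M[R]_n) :
  sym_posdef C -> P \in unitmx -> sym_posdef (P^T *m C *m P).
Proof.
case=> Csym Cpos Punit; split; first by rewrite !trmx_mul trmxK Csym mulmxA.
move=> v v_neq0; have vP_neq0 : v *m P^T != 0.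
  have PTunit : P^T \in unitmx by rewrite unitmx_tr.
  by apply: contraNneq v_neq0 => vP0; rewrite -[v](mulmxK PTunit) vP0 mul0mx.
by have := Cpos _ vP_neq0; rewrite trmx_mul trmxK !mulmxA.
Qed.

Lemma sym_posdef_eigenvalue_gt0 (S : 'M[R]_n) (a : R) :
  sym_posdef S -> eigenvalue S a -> 0 < a.
Proof.
case=> _ Spos /eigenvalueP[v vS v_neq0].
have := Spos _ v_neq0; rewrite vS -scalemxAl mxE.
by rewrite pmulr_lgt0 // row_dot_self_gt0.
Qed.

End PositiveDefinite.

Unset Implicit Arguments. Set Strict Implicit.

Theorem mainTheorem1 (R : rcfType) (N : nat) (hN : (1 <= N)%N)
  (lam : 'rV[R]_N) (hlam : forall i, 0 < lam ord0 i)
  (C : 'M[R]_N) (hC : sym_posdef C) (hdiag : forall i, C i i = 1) :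
  exists mu : 'rV[R]_N,
    char_poly (diag_mx lam *m C) = \prod_(i < N) ('X - (mu ord0 i)%:P) /\
    (forall i, 0 < mu ord0 i) /\
    majorizes [seq mu ord0 i | i <- enum 'I_N] [seq lam ord0 i | i <- enum 'I_N].
Proof.
pose Dh := diag_mx (\row_i Num.sqrt (lam ord0 i)).
have sqrt_lam i : Num.sqrt (lam ord0 i) ^+ 2 = lam ord0 i by rewrite sqr_sqrtr ?ltW.
have Dh_unit : Dh \in unitmx.
  by rewrite unitmxE det_diag unitfE; apply/prodf_neq0 => i _; rewrite mxE sqrtr_eq0 -ltNge.
have DhDh : Dh *m Dh = diag_mx lam.
  by rewrite mulmx_diag; congr diag_mx; apply/rowP => i; rewrite !mxE -expr2 sqrt_lam.
pose S := Dh *m C *m Dh.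
have S_posdef : sym_posdef S.
  by rewrite /S -[X in X *m C]tr_diag_mx; apply: sym_posdef_congr.
have charS : char_poly (diag_mx lam *m C) = char_poly S.
  by rewrite -(char_poly_conjmx (P := invmx Dh)) ?unitmx_inv // conjVmx // -DhDh
    -!mulmxA mulKmx // mulmxA.
have S_diag i : S i i = lam ord0 i.
  by rewrite /S mul_mx_diag mxE mul_diag_mx mxE hdiag mulr1 !mxE -expr2 sqrt_lam.
have [mu [Q [charS_mu Q_ds S_Q]]] := sym_diag_doubly_stochastic_spectrum S_posdef.1.
exists mu; split; first by rewrite charS.
split; last by apply: (doubly_stochastic_majorizes Q_ds) => i; rewrite -S_Q S_diag.
move=> i; apply: (sym_posdef_eigenvalue_gt0 S_posdef).
by rewrite eigenvalue_root_char charS_mu /root horner_prod (bigD1 i) //= hornerXsubC subrr mul0r.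
Qed.
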